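(* Let $k,a,b$ be positive real numbers. The $k$-FL sequence $\{S^{(a,b)}_{k,n}\}_{n\ge0}$ is a geometric sequence if and only if $a^2=(k^2+4)b^2$. In particular, given a positive real number $k$, there are infinitely many pairs $(a,b)$ such that $\{S^{(a,b)}_{k,n}\}_{n\ge0}$ is a geometric sequence.
   Context: The $k$-FL sequence (for positive reals $k,a,b$) is $S^{(a,b)}_{k,0}=2b$, $S^{(a,b)}_{k,1}=bk+a$, $S^{(a,b)}_{k,n}=kS^{(a,b)}_{k,n-1}+S^{(a,b)}_{k,n-2}$. *)

From Stdlib Require Import Reals.
Open Scope R_scope.

(* The k-FL sequence S^{(a,b)}_{k,n}:
   S_0 = 2b, S_1 = b k + a, S_n = k S_{n-1} + S_{n-2}. *)
Fixpoint kFL_aux (k a b : R) (n : nat) : R * R :=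
  match n with
  | O => (2 * b, b * k + a)
  | S m => let p := kFL_aux k a b m in (snd p, k * snd p + fst p)
  end.

Definition kFL (k a b : R) (n : nat) : R := fst (kFL_aux k a b n).

Definition is_geometric (u : nat -> R) : Prop :=
  exists r : R, forall n : nat, u (S n) = r * u n.

(** A sequence with [u (n+2) = k u (n+1) + u n] and [u 0 <> 0] is geometric
    exactly when its ratio [r = u 1 / u 0] is a root of [r^2 = k r + 1], i.e.
    when [u 1 ^ 2 = u 0 * u 2].  For the k-FL sequence, [u 0 = 2b] and
    [u 1 = bk + a], and this condition expands to [a^2 = (k^2 + 4) b^2].
    Every [b > 0] then gives the pair [(b * sqrt (k^2 + 4), b)]. *)

From Stdlib Require Import Reals Lra Psatz.
Open Scope R_scope.

Lemma geometric_sq (u : nat -> R) :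
  is_geometric u -> u 1%nat ^ 2 = u 0%nat * u 2%nat.
Proof.
  intros [r Hr].
  rewrite (Hr 1%nat), (Hr 0%nat).
  ring.
Qed.

Section SecondOrderRecurrence.

Variables (k : R) (u : nat -> R).
Hypothesis u_rec : forall n, u (S (S n)) = k * u (S n) + u n.

Lemma recurrence_geometric (r : R) :
  r ^ 2 = k * r + 1 -> u 1%nat = r * u 0%nat -> is_geometric u.
Proof.
  intros Hr H1.
  exists r.
  induction n as [|n IH]; [exact H1|].
  rewrite u_rec, IH.
  replace (k * (r * u n) + u n) with ((k * r + 1) * u n) by ring.
  rewrite <- Hr.
  ring.
Qed.

Lemma recurrence_geometric_iff :
  u 0%nat <> 0 ->
  (is_geometric u <-> u 1%nat ^ 2 = u 0%nat * (k * u 1%nat + u 0%nat)).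
Proof.
  intros Hu0; split.
  - intros Hgeo.
    rewrite <- u_rec.
    exact (geometric_sq u Hgeo).
  - intros Hsq.
    set (r := u 1%nat / u 0%nat).
    assert (H1 : u 1%nat = r * u 0%nat) by (unfold r; field; exact Hu0).
    apply (recurrence_geometric r); [|exact H1].
    rewrite H1 in Hsq.
    apply (Rmult_eq_reg_r (u 0%nat ^ 2)); [|now apply pow_nonzero].
    lra.
Qed.

End SecondOrderRecurrence.

Lemma kFL_aux_eq (k a b : R) (n : nat) :
  kFL_aux k a b n = (kFL k a b n, kFL k a b (S n)).
Proof.
  induction n as [|n IH]; [reflexivity|].
  unfold kFL at 2; simpl; rewrite IH.
  reflexivity.
Qed.

Lemma kFL_rec (k a b : R) (n : nat) :
  kFL k a b (S (S n)) = k * kFL k a b (S n) + kFL k a b n.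
Proof.
  unfold kFL at 1; simpl.
  rewrite kFL_aux_eq.
  reflexivity.
Qed.

Lemma kFL_geometric_iff (k a b : R) :
  b <> 0 -> (is_geometric (kFL k a b) <-> a ^ 2 = (k ^ 2 + 4) * b ^ 2).
Proof.
  intros Hb.
  rewrite (recurrence_geometric_iff k _ (kFL_rec k a b)) by (unfold kFL; simpl; lra).
  change (kFL k a b 0%nat) with (2 * b).
  change (kFL k a b 1%nat) with (b * k + a).
  assert (Hexp : (b * k + a) ^ 2 - 2 * b * (k * (b * k + a) + 2 * b)
                 = a ^ 2 - (k ^ 2 + 4) * b ^ 2) by ring.
  split; intros H; lra.
Qed.

Lemma sqrt_scaled_sq (c b : R) :
  0 <= c -> (b * sqrt c) ^ 2 = c * b ^ 2.
Proof.
  intros Hc.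
  rewrite Rpow_mult_distr, pow2_sqrt by exact Hc.
  ring.
Qed.

Theorem corollary4p20 :
  (forall k a b : R, 0 < k -> 0 < a -> 0 < b ->
     (is_geometric (kFL k a b) <-> a ^ 2 = (k ^ 2 + 4) * b ^ 2))
  /\
  (forall k : R, 0 < k ->
     exists f : nat -> R * R,
       (forall m n : nat, f m = f n -> m = n) /\
       (forall n : nat, 0 < fst (f n) /\ 0 < snd (f n) /\
          is_geometric (kFL k (fst (f n)) (snd (f n))))).
Proof.
  split.
  - intros k a b _ _ Hb.
    apply kFL_geometric_iff; lra.
  - intros k _.
    assert (Hc : 0 < k ^ 2 + 4) by nra.
    exists (fun n => ((INR n + 1) * sqrt (k ^ 2 + 4), INR n + 1)).
    split.
    + intros m n Hmn.
      apply (f_equal snd) in Hmn; simpl in Hmn.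
      apply INR_eq; lra.
    + intros n; simpl.
      assert (Hn : 0 < INR n + 1) by (pose proof (pos_INR n); lra).
      split; [apply Rmult_lt_0_compat; [exact Hn | now apply sqrt_lt_R0]|].
      split; [exact Hn|].
      apply kFL_geometric_iff; [lra|].
      apply sqrt_scaled_sq; lra.
Qed.
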